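(* Let $F : \mathsf{Set} \to \mathsf{Set}$ be a finitary functor which preserves pullbacks of monomorphisms. Let $\rho$ be an uncountable regular ordinal. Then $F$ preserves $\rho^{\mathrm{op}}$-indexed limits: for every functor $X : \rho^{\mathrm{op}} \to \mathsf{Set}$ (i.e. a family of sets $(X_\alpha)_{\alpha<\rho}$ with restriction maps $X_\alpha \to X_\beta$ for $\beta \le \alpha$, compatible with composition), the canonical comparison map $F(\lim_{\alpha<\rho} X_\alpha) \to \lim_{\alpha<\rho} F(X_\alpha)$ is a bijection.
   Context: A functor $F:\mathsf{Set}\to\mathsf{Set}$ is finitary if it preserves directed colimits. $F$ preserves pullbacks of monomorphisms if for every pullback square $A \to B$, $A \to C$, $B \rightarrowtail D$, $C \to D$ in $\mathsf{Set}$ in which $B \to D$ is a monomorphism, the image of the square under $F$ is again a pullback square. An ordinal $\rho$ is regular if it is a limit ordinal equal to its own cofinality (every subset of $\rho$ of cardinality smaller than $\rho$ is bounded in $\rho$); here $\rho$ is moreover assumed uncountable. The ordinal $\rho$ is viewed as a poset category, and $\rho^{\mathrm{op}}$ is its opposite. *)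

Record SetFunctor := {
  Fob : Type -> Type;
  fmap : forall (A B : Type), (A -> B) -> Fob A -> Fob B;
  fmap_id : forall (A : Type) (x : Fob A), fmap A A (fun a => a) x = x;
  fmap_comp : forall (A B C : Type) (f : A -> B) (g : B -> C) (x : Fob A),
      fmap A C (fun a => g (f a)) x = fmap B C g (fmap A B f x)
}.

Arguments fmap s {A B} _ _.

Definition is_mono {B D : Type} (f : B -> D) : Prop :=
  forall (Z : Type) (g h : Z -> B), (forall z, f (g z) = f (h z)) ->
    forall z, g z = h z.

Definition is_pullback {A B C D : Type}
  (p : A -> B) (q : A -> C) (f : B -> D) (g : C -> D) : Prop :=
  (forall a, f (p a) = g (q a)) /\
  forall (Z : Type) (z1 : Z -> B) (z2 : Z -> C),
    (forall z, f (z1 z) = g (z2 z)) ->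
    exists u : Z -> A,
      (forall z, p (u z) = z1 z /\ q (u z) = z2 z) /\
      forall u' : Z -> A, (forall z, p (u' z) = z1 z /\ q (u' z) = z2 z) ->
        forall z, u' z = u z.

Definition preserves_mono_pullbacks (F : SetFunctor) : Prop :=
  forall (A B C D : Type) (p : A -> B) (q : A -> C) (f : B -> D) (g : C -> D),
    is_mono f -> is_pullback p q f g ->
    is_pullback (fmap F p) (fmap F q) (fmap F f) (fmap F g).

Definition is_directed {I : Type} (le : I -> I -> Prop) : Prop :=
  (forall i, le i i) /\ (forall i j k, le i j -> le j k -> le i k) /\
  (exists i : I, True) /\ (forall i j, exists k, le i k /\ le j k).

Definition is_diagram {I : Type} (le : I -> I -> Prop) (D : I -> Type)
  (d : forall i j, le i j -> D i -> D j) : Prop :=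
  (forall i (h : le i i) x, d i i h x = x) /\
  (forall i j k (hij : le i j) (hjk : le j k) (hik : le i k) x,
      d j k hjk (d i j hij x) = d i k hik x).

Definition is_cocone {I : Type} {le : I -> I -> Prop} {D : I -> Type}
  (d : forall i j, le i j -> D i -> D j) {C : Type} (c : forall i, D i -> C) : Prop :=
  forall i j (h : le i j) x, c j (d i j h x) = c i x.

Definition is_colimit {I : Type} {le : I -> I -> Prop} {D : I -> Type}
  (d : forall i j, le i j -> D i -> D j) {C : Type} (c : forall i, D i -> C) : Prop :=
  is_cocone d c /\
  forall (Y : Type) (y : forall i, D i -> Y), is_cocone d y ->
    exists u : C -> Y, (forall i x, u (c i x) = y i x) /\
      forall u' : C -> Y, (forall i x, u' (c i x) = y i x) -> forall z, u' z = u z.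

Definition finitary (F : SetFunctor) : Prop :=
  forall (I : Type) (le : I -> I -> Prop) (D : I -> Type)
         (d : forall i j, le i j -> D i -> D j) (C : Type) (c : forall i, D i -> C),
    is_directed le -> is_diagram le D d -> is_colimit d c ->
    is_colimit (D := fun i => Fob F (D i))
               (fun i j h => fmap F (d i j h)) (fun i => fmap F (c i)).

(** * Ordinals, represented by well-ordered types: rho = (T, lt) *)
Definition is_well_order {T : Type} (lt : T -> T -> Prop) : Prop :=
  well_founded lt /\ (forall x y z, lt x y -> lt y z -> lt x z) /\
  (forall x y, lt x y \/ x = y \/ lt y x).

Definition ord_le {T : Type} (lt : T -> T -> Prop) (x y : T) : Prop :=
  lt x y \/ x = y.

Definition is_limit_ordinal {T : Type} (lt : T -> T -> Prop) : Prop :=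
  (exists x : T, True) /\ forall a, exists b, lt a b.

(** Every subset S of rho of cardinality smaller than rho (i.e. injecting into
    some alpha = {x | x < alpha} with alpha < rho) is bounded in rho. *)
Definition is_regular_ordinal {T : Type} (lt : T -> T -> Prop) : Prop :=
  is_limit_ordinal lt /\
  forall (S : T -> Prop) (a : T) (h : T -> T),
    (forall s, S s -> lt (h s) a) ->
    (forall s1 s2, S s1 -> S s2 -> h s1 = h s2 -> s1 = s2) ->
    exists b, forall s, S s -> lt s b.

Definition is_uncountable (T : Type) : Prop :=
  ~ exists f : T -> nat, forall x y, f x = f y -> x = y.

Definition is_op_diagram {T : Type} (lt : T -> T -> Prop) (X : T -> Type)
  (r : forall a b, ord_le lt b a -> X a -> X b) : Prop :=
  (forall a (h : ord_le lt a a) x, r a a h x = x) /\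
  (forall a b c (hba : ord_le lt b a) (hcb : ord_le lt c b) (hca : ord_le lt c a) x,
      r b c hcb (r a b hba x) = r a c hca x).

Definition op_limit {T : Type} (lt : T -> T -> Prop) (X : T -> Type)
  (r : forall a b, ord_le lt b a -> X a -> X b) : Type :=
  { x : forall a, X a | forall a b (h : ord_le lt b a), r a b h (x a) = x b }.

Definition comparison (F : SetFunctor) {T : Type} (lt : T -> T -> Prop)
  (X : T -> Type) (r : forall a b, ord_le lt b a -> X a -> X b)
  (y : Fob F (op_limit lt X r)) : forall a, Fob F (X a) :=
  fun a => fmap F (fun l : op_limit lt X r => proj1_sig l a) y.

(* Finitarity gives every element of F(A) a finite support, and preservation of
   pullbacks of monomorphisms makes supports closed under intersection, so each
   element has a least finite support.  Given a compatible family (z_a), the sizes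
   of the least supports of z_a grow with a.  They are bounded: otherwise countably
   many stages would witness unboundedness, and by regularity and uncountability
   these stages lie below a single stage, whose support is finite.  Hence the sizes
   are constant from some a0 on, where the restriction maps become bijections
   between least supports; each element of the least support at a0 then extends to
   a unique thread, i.e. an element of lim X, and F applied to the inclusion of
   these finitely many threads yields a preimage of (z_a).  For injectivity, two
   elements of F(lim X) have a common finite support of threads, which are already
   separated at some single stage a, so the projection to X_a is injective on it
   and F preserves this monomorphism. *)

From Stdlib Require Import List Lia Wf_nat.
From Stdlib Require Import Classical ClassicalEpsilon ProofIrrelevance
  FunctionalExtensionality PropExtensionality.
Import ListNotations.

Lemma proj1_sig_inj {A} {P : A -> Prop} (x y : {a | P a}) : proj1_sig x = proj1_sig y -> x = y.
Proof. apply eq_sig_hprop; intros; apply proof_irrelevance. Qed.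

Lemma is_mono_proj1_sig {A} (P : A -> Prop) : is_mono (@proj1_sig A P).
Proof. intros Z g h H z. apply proj1_sig_inj, H. Qed.

Lemma dependent_choice {A} {B : A -> Type} (R : forall a, B a -> Prop) :
  (forall a, exists b, R a b) -> exists f : forall a, B a, forall a, R a (f a).
Proof.
  intros H. exists (fun a => proj1_sig (constructive_indefinite_description _ (H a))).
  intros a. exact (proj2_sig (constructive_indefinite_description _ (H a))).
Qed.

Lemma exists_min_measure {A} (f : A -> nat) (P : A -> Prop) :
  (exists x, P x) -> exists x, P x /\ forall y, P y -> f x <= f y.
Proof.
  intros [x Hx].
  destruct (dec_inh_nat_subset_has_unique_least_element (fun n => exists x, P x /\ f x = n))
    as [n [[[y [Hy <-]] Hmin] _]].
  - intros n; apply classic.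
  - eauto.
  - exists y; split; auto. intros y' Hy'. apply Hmin; eauto.
Qed.

Lemma bounded_nat_attains_max {A} (f : A -> nat) :
  inhabited A -> (exists N, forall x, f x <= N) -> exists x0, forall x, f x <= f x0.
Proof.
  intros [a] HN.
  destruct (exists_min_measure (fun N => N) _ HN) as [N [HfN Hmin]].
  destruct (classic (exists x0, f x0 = N)) as [[x0 <-]|Hno]; [now exists x0|].
  assert (Hlt : forall x, f x < N).
  { intros x. specialize (HfN x).
    destruct (PeanoNat.Nat.eq_dec (f x) N); [exfalso; eauto|lia]. }
  assert (Hpred : forall x, f x <= pred N) by (intros x; specialize (Hlt x); lia).
  specialize (Hmin _ Hpred). specialize (Hlt a). lia.
Qed.

Lemma NoDup_map_injective_in {A B} (f : A -> B) l :
  NoDup (map f l) -> forall x y, In x l -> In y l -> f x = f y -> x = y.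
Proof.
  induction l as [|a t IH]; simpl; intros Hn x y Hx Hy Hxy; [contradiction|].
  inversion Hn as [|b s Hb Hs]; subst.
  destruct Hx as [<-|Hx], Hy as [<-|Hy]; auto.
  - exfalso; apply Hb. rewrite Hxy. now apply in_map.
  - exfalso; apply Hb. rewrite <- Hxy. now apply in_map.
Qed.

Section Supports.

Variable F : SetFunctor.

Definition supports {A} (P : A -> Prop) (w : Fob F A) : Prop :=
  exists u : Fob F {a | P a}, fmap F (@proj1_sig A P) u = w.

Lemma supports_weaken {A} (P Q : A -> Prop) w :
  (forall a, P a -> Q a) -> supports P w -> supports Q w.
Proof.
  intros H [u <-].
  exists (fmap F (fun x : {a | P a} => exist Q (proj1_sig x) (H _ (proj2_sig x))) u).
  now rewrite <- fmap_comp.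
Qed.

Lemma supports_image {A B} (f : A -> B) (P : A -> Prop) w :
  supports P w -> supports (fun b => exists a, P a /\ f a = b) (fmap F f w).
Proof.
  intros [u <-].
  exists (fmap F (fun x : {a | P a} => exist (fun b => exists a, P a /\ f a = b)
                   (f (proj1_sig x)) (ex_intro _ (proj1_sig x) (conj (proj2_sig x) eq_refl))) u).
  now rewrite <- !fmap_comp.
Qed.

Lemma supports_map {A B} (f : A -> B) (l : list A) w :
  supports (fun a => In a l) w -> supports (fun b => In b (map f l)) (fmap F f w).
Proof.
  intros H. eapply supports_weaken; [|exact (supports_image f _ w H)].
  intros b. rewrite in_map_iff. firstorder.
Qed.

Lemma finitary_list_support (HF : finitary F) {A} (w : Fob F A) :
  exists l : list A, supports (fun a => In a l) w.
Proof.
  set (D := fun l : list A => {a | In a l}).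
  set (d := fun l1 l2 (h : incl l1 l2) (x : D l1) =>
              exist (fun a => In a l2) (proj1_sig x) (h _ (proj2_sig x)) : D l2).
  set (c := fun l (x : D l) => proj1_sig x).
  assert (Hdir : is_directed (@incl A)).
  { split; [apply incl_refl|]. split; [intros i j k; apply incl_tran|].
    split; [now exists nil|].
    intros i j; exists (i ++ j); split; [apply incl_appl|apply incl_appr]; apply incl_refl. }
  assert (Hdiag : is_diagram (@incl A) D d) by (split; intros; now apply proj1_sig_inj).
  assert (Hcol : is_colimit d c).
  { split; [now intros|].
    intros Y y Hy. exists (fun a => y [a] (exist _ a (or_introl eq_refl))). split.
    - intros i [a p]. assert (h : incl [a] i) by (intros b [<-|[]]; exact p).
      rewrite <- (Hy [a] i h). f_equal. now apply proj1_sig_inj.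
    - intros u' Hu' a. exact (Hu' [a] (exist _ a (or_introl eq_refl))). }
  (* The colimit cocone under F is jointly surjective: the Prop-valued cocones
     "lies in the image of some inclusion" and "True" factor through the same map. *)
  destruct (proj2 (HF _ _ D d A c Hdir Hdiag Hcol) Prop (fun _ _ => True)) as [u [_ Huniq]];
    [now red|].
  set (in_image := fun w => exists l v, fmap F (c l) v = w).
  assert (Himage : in_image = fun _ => True).
  { extensionality w'.
    assert (Hc : forall i x, in_image (fmap F (c i) x) = True).
    { intros i x. apply propositional_extensionality.
      split; [auto|]. intros _; now exists i, x. }
    now rewrite (Huniq in_image Hc w'), (Huniq (fun _ => True) (fun _ _ => eq_refl) w'). }
  assert (Hw : in_image w) by (rewrite Himage; exact I).
  destruct Hw as [l [v Hv]]. now exists l, v.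
Qed.

Section MonoPullbacks.

Hypothesis HP : preserves_mono_pullbacks F.

Lemma fmap_mono_injective {B D} (f : B -> D) :
  is_mono f -> forall x y, fmap F f x = fmap F f y -> x = y.
Proof.
  intros Hm x y Hxy.
  assert (Hpb : is_pullback (fun b : B => b) (fun b => b) f f).
  { split; [reflexivity|].
    intros Z z1 z2 Hz. exists z1. split.
    - intros z. split; [reflexivity|apply (Hm Z z1 z2 Hz)].
    - intros u' Hu' z. apply (proj1 (Hu' z)). }
  destruct (proj2 (HP _ _ _ _ _ _ _ _ Hm Hpb) unit (fun _ => x) (fun _ => y) (fun _ => Hxy))
    as [u [Hu _]].
  destruct (Hu tt) as [H1 H2]. rewrite fmap_id in H1, H2. congruence.
Qed.

Lemma supports_preimage {A B} (f : A -> B) (Q : B -> Prop) w :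
  supports Q (fmap F f w) -> supports (fun a => Q (f a)) w.
Proof.
  intros [v Hv].
  set (p := fun x : {a | Q (f a)} => exist Q (f (proj1_sig x)) (proj2_sig x)).
  assert (Hpb : is_pullback p (@proj1_sig A (fun a => Q (f a))) (@proj1_sig B Q) f).
  { split; [reflexivity|].
    intros Z z1 z2 Hz.
    assert (Hq : forall z, Q (f (z2 z))) by (intro z; rewrite <- Hz; apply proj2_sig).
    exists (fun z => exist (fun a => Q (f a)) (z2 z) (Hq z)). split.
    - intros z; split; [apply proj1_sig_inj; symmetry; apply Hz|reflexivity].
    - intros u' Hu' z. apply proj1_sig_inj, (proj2 (Hu' z)). }
  destruct (proj2 (HP _ _ _ _ _ _ _ _ (is_mono_proj1_sig _) Hpb) unit
              (fun _ => v) (fun _ => w) (fun _ => Hv)) as [u [Hu _]].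
  exists (u tt). apply (proj2 (Hu tt)).
Qed.

Lemma supports_inter {A} (P Q : A -> Prop) w :
  supports P w -> supports Q w -> supports (fun a => P a /\ Q a) w.
Proof.
  intros [u <-] HQ.
  pose proof (supports_image (@proj1_sig A P) _ u (supports_preimage (@proj1_sig A P) Q u HQ)) as H.
  eapply supports_weaken; [|exact H].
  intros a [[a' Pa'] [Hq <-]]. now split.
Qed.

End MonoPullbacks.

Definition least_support {A} (w : Fob F A) (l : list A) : Prop :=
  supports (fun a => In a l) w /\
  forall l', supports (fun a => In a l') w -> length l <= length l'.

Lemma least_support_exists (HF : finitary F) {A} (w : Fob F A) : exists l, least_support w l.
Proof. exact (exists_min_measure (@length A) _ (finitary_list_support HF w)). Qed.

Lemma least_support_NoDup {A} (w : Fob F A) l : least_support w l -> NoDup l.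
Proof.
  intros [Hl Hmin].
  assert (Hdec : forall x y : A, {x = y} + {x <> y}) by (intros; apply excluded_middle_informative).
  apply (NoDup_incl_NoDup (l := nodup Hdec l)); [apply NoDup_nodup| |].
  - apply Hmin. eapply supports_weaken; [|exact Hl]. intros a. apply nodup_In.
  - intros a. apply nodup_In.
Qed.

Lemma least_support_incl (HP : preserves_mono_pullbacks F) {A} (w : Fob F A) l (Q : A -> Prop) :
  least_support w l -> supports Q w -> forall x, In x l -> Q x.
Proof.
  intros [Hl Hmin] HQ.
  set (q := fun a => if excluded_middle_informative (Q a) then true else false).
  assert (Hq : forall a, q a = true <-> Q a)
    by (intros a; unfold q; destruct (excluded_middle_informative (Q a)); intuition discriminate).
  assert (Hfilter : length (filter q l) = length l).
  { apply PeanoNat.Nat.le_antisymm; [apply filter_length_le|].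
    apply Hmin. eapply supports_weaken; [|exact (supports_inter HP _ _ w Hl HQ)].
    intros a. rewrite filter_In, Hq. tauto. }
  intros x Hx. apply Hq. apply filter_length_forallb in Hfilter.
  exact (proj1 (forallb_forall q l) Hfilter x Hx).
Qed.

End Supports.

Section WellOrders.

Context {T : Type} (lt : T -> T -> Prop) (Hwo : is_well_order lt).

Lemma wo_irrefl x : ~ lt x x.
Proof.
  induction x as [x IH] using (well_founded_ind (proj1 Hwo)). intros H. exact (IH x H H).
Qed.

Lemma ord_le_trans x y z : ord_le lt x y -> ord_le lt y z -> ord_le lt x z.
Proof. destruct Hwo as [_ [Htr _]]. intros [H1|<-] [H2|<-]; red; eauto. Qed.

Lemma ord_le_lt_trans x y z : ord_le lt x y -> lt y z -> lt x z.
Proof. destruct Hwo as [_ [Htr _]]. intros [H1|<-] H2; eauto. Qed.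

Lemma not_lt_ord_le x y : ~ lt x y -> ord_le lt y x.
Proof.
  destruct Hwo as [_ [_ Htri]]. intros H.
  destruct (Htri x y) as [|[<-|]]; [contradiction|now right|now left].
Qed.

Lemma ord_le_total x y : ord_le lt x y \/ ord_le lt y x.
Proof.
  destruct (classic (lt x y)) as [H|H]; [left; now left|right; now apply not_lt_ord_le].
Qed.

Lemma ord_le_upper_bound x y : exists z, ord_le lt x z /\ ord_le lt y z.
Proof.
  destruct (ord_le_total x y); [exists y|exists x]; split; auto; now right.
Qed.

Lemma wo_least (P : T -> Prop) :
  (exists x, P x) -> exists m, P m /\ forall x, P x -> ord_le lt m x.
Proof.
  intros [x Hx]. revert Hx.
  induction x as [x IH] using (well_founded_ind (proj1 Hwo)). intros Hx.
  destruct (classic (exists y, P y /\ lt y x)) as [[y [Hy Hyx]]|Hno]; [exact (IH y Hyx Hy)|].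
  exists x. split; auto. intros y Hy. apply not_lt_ord_le. intros Hyx. eauto.
Qed.

Lemma eventually_forall_list {B} (Q : T -> B -> Prop) :
  inhabited T ->
  (forall a b x, ord_le lt a b -> Q a x -> Q b x) -> (forall x, exists a, Q a x) ->
  forall l, exists a, forall x, In x l -> Q a x.
Proof.
  intros [t0] Hup Hev l. induction l as [|x l [a Ha]]; [now exists t0|].
  destruct (Hev x) as [b Hb]. destruct (ord_le_upper_bound a b) as [c [Hac Hbc]].
  exists c. intros y [<-|Hy]; eauto.
Qed.

Lemma wo_succ_exists :
  (forall a, exists b, lt a b) ->
  exists succ : T -> T, forall t, lt t (succ t) /\ forall b, lt t b -> ord_le lt (succ t) b.
Proof.
  intros H. apply (choice (fun t s => lt t s /\ forall b, lt t b -> ord_le lt s b)).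
  intros t. now apply wo_least.
Qed.

Lemma omega_initial_segment :
  is_limit_ordinal lt ->
  exists e : nat -> T, (forall j k, j < k -> lt (e j) (e k)) /\
                       (forall k t, ord_le lt t (e k) -> exists j, t = e j).
Proof.
  intros [Hinh Hunb].
  destruct (wo_least (fun _ => True) Hinh) as [bot [_ Hbot]].
  destruct (wo_succ_exists Hunb) as [succ Hsucc].
  exists (fun k => Nat.iter k succ bot). split.
  - intros j k Hjk. induction Hjk; [apply (proj1 (Hsucc _))|].
    eapply (proj1 (proj2 Hwo)); [exact IHHjk|apply (proj1 (Hsucc _))].
  - induction k as [|k IH]; intros t [Ht| ->]; try now eexists.
    + exfalso. apply (wo_irrefl bot). exact (ord_le_lt_trans _ _ _ (Hbot t I) Ht).
    + apply IH, not_lt_ord_le. intros Hkt.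
      apply (wo_irrefl _ (ord_le_lt_trans _ _ _ (proj2 (Hsucc _) t Hkt) Ht)).
Qed.

Lemma strictly_increasing_injective (e : nat -> T) :
  (forall j k, j < k -> lt (e j) (e k)) -> forall j k, e j = e k -> j = k.
Proof.
  intros He j k E. destruct (PeanoNat.Nat.lt_trichotomy j k) as [H|[H|H]]; auto;
    exfalso; pose proof (He _ _ H) as Hlt; rewrite E in Hlt; exact (wo_irrefl _ Hlt).
Qed.

Lemma omega_segment_bounded (e : nat -> T) :
  is_uncountable T ->
  (forall j k, j < k -> lt (e j) (e k)) ->
  (forall k t, ord_le lt t (e k) -> exists j, t = e j) ->
  exists b, forall k, lt (e k) b.
Proof.
  intros Hunc He Hcov. apply NNPP. intros Hnb. apply Hunc.
  assert (Hall : forall t, exists j, e j = t).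
  { intros t. apply NNPP. intros Hno. apply Hnb. exists t. intros k.
    apply NNPP. intros Hk. apply Hno.
    destruct (Hcov k t (not_lt_ord_le _ _ Hk)) as [j ->]. now exists j. }
  destruct (choice _ Hall) as [idx Hidx].
  exists idx. intros x y E. now rewrite <- (Hidx x), <- (Hidx y), E.
Qed.

Section Regular.

Hypotheses (Hreg : is_regular_ordinal lt) (Hunc : is_uncountable T).

Lemma countable_bounded (g : nat -> T) : exists b, forall k, lt (g k) b.
Proof.
  destruct (omega_initial_segment (proj1 Hreg)) as [e [He Hcov]].
  destruct (omega_segment_bounded e Hunc He Hcov) as [a Ha].
  assert (Hidx : forall t, exists k, (exists j, g j = t) -> g k = t).
  { intros t. destruct (classic (exists j, g j = t)) as [[j Hj]|Hno]; [now exists j|].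
    exists 0. now intros. }
  destruct (choice _ Hidx) as [idx Hgidx].
  destruct (proj2 Hreg (fun t => exists j, g j = t) a (fun t => e (idx t))) as [b Hb].
  - intros t _. apply Ha.
  - intros t1 t2 H1 H2 E.
    apply strictly_increasing_injective in E; [|exact He].
    now rewrite <- (Hgidx t1 H1), <- (Hgidx t2 H2), E.
  - exists b. intros k. apply Hb. now exists k.
Qed.

Lemma monotone_nat_attains_max (f : T -> nat) :
  (forall a b, ord_le lt a b -> f a <= f b) -> exists a0, forall a, f a <= f a0.
Proof.
  intros Hmono.
  destruct (proj1 (proj1 Hreg)) as [t0 _].
  apply bounded_nat_attains_max; [now constructor|].
  apply NNPP. intros Hnb.
  assert (Hk : forall k, exists a, k < f a).
  { intros k. apply NNPP. intros Hk. apply Hnb. exists k. intros a.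
    apply PeanoNat.Nat.nlt_ge. eauto. }
  destruct (choice _ Hk) as [g Hg].
  destruct (countable_bounded g) as [b Hb].
  specialize (Hmono _ _ (or_introl (Hb (f b)))). specialize (Hg (f b)). lia.
Qed.

End Regular.

End WellOrders.

Section Limits.

Context (F : SetFunctor) {T : Type} (lt : T -> T -> Prop) (Hwo : is_well_order lt)
  (X : T -> Type) (r : forall a b, ord_le lt b a -> X a -> X b).

Lemma op_limit_eq (t t' : op_limit lt X r) :
  (forall a, proj1_sig t a = proj1_sig t' a) -> t = t'.
Proof. intros H. apply proj1_sig_inj, functional_extensionality_dep, H. Qed.

Lemma comparison_cone (y : Fob F (op_limit lt X r)) a b (h : ord_le lt b a) :
  fmap F (r a b h) (comparison F lt X r y a) = comparison F lt X r y b.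
Proof.
  unfold comparison. rewrite <- fmap_comp. f_equal.
  extensionality t. apply (proj2_sig t).
Qed.

Lemma comparison_injective (HF : finitary F) (HP : preserves_mono_pullbacks F) :
  inhabited T ->
  forall y1 y2 : Fob F (op_limit lt X r),
    (forall a, comparison F lt X r y1 a = comparison F lt X r y2 a) -> y1 = y2.
Proof.
  intros Hinh y1 y2 Heq.
  destruct (finitary_list_support F HF y1) as [l1 H1], (finitary_list_support F HF y2) as [l2 H2].
  set (l := l1 ++ l2).
  destruct (supports_weaken F _ (fun t => In t l) y1
              (fun t Ht => in_or_app _ _ _ (or_introl Ht)) H1) as [v1 <-].
  destruct (supports_weaken F _ (fun t => In t l) y2
              (fun t Ht => in_or_app _ _ _ (or_intror Ht)) H2) as [v2 <-].
  destruct (eventually_forall_list lt Hwo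
              (fun a (p : op_limit lt X r * op_limit lt X r) =>
                 proj1_sig (fst p) a = proj1_sig (snd p) a -> fst p = snd p)
              Hinh) with (l := list_prod l l) as [a Ha].
  - intros a b [t t'] Hab H E. apply H. simpl in *.
    now rewrite <- (proj2_sig t b a Hab), <- (proj2_sig t' b a Hab), E.
  - intros [t t']. simpl.
    destruct (classic (exists a, proj1_sig t a <> proj1_sig t' a)) as [[a Ha]|Hno].
    + exists a. intros E. contradiction.
    + destruct Hinh as [a]. exists a. intros _. apply op_limit_eq.
      intros b. apply NNPP. intros Hb. apply Hno. now exists b.
  - f_equal. apply (fmap_mono_injective F HP (fun t : {t | In t l} => proj1_sig (proj1_sig t) a)).
    + intros Z g h Hgh w. apply proj1_sig_inj.
      apply (Ha (proj1_sig (g w), proj1_sig (h w))); [apply in_prod; apply proj2_sig|apply Hgh].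
    + specialize (Heq a). unfold comparison in Heq. now rewrite <- !fmap_comp in Heq.
Qed.

End Limits.

Section Surjectivity.

Context (F : SetFunctor) (HP : preserves_mono_pullbacks F)
  {T : Type} (lt : T -> T -> Prop) (Hwo : is_well_order lt)
  (X : T -> Type) (r : forall a b, ord_le lt b a -> X a -> X b) (HX : is_op_diagram lt X r)
  (z : forall a, Fob F (X a))
  (Hz : forall a b (h : ord_le lt b a), fmap F (r a b h) (z a) = z b)
  (lsupp : forall a, list (X a)) (Hlsupp : forall a, least_support F (z a) (lsupp a)).

Lemma supports_restrict_lsupp a b (h : ord_le lt b a) :
  supports F (fun x => In x (map (r a b h) (lsupp a))) (z b).
Proof. rewrite <- (Hz a b h). apply supports_map, (proj1 (Hlsupp a)). Qed.

Lemma length_lsupp_monotone a b : ord_le lt b a -> length (lsupp b) <= length (lsupp a).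
Proof.
  intros h. rewrite <- (length_map (r a b h)).
  apply (proj2 (Hlsupp b)), supports_restrict_lsupp.
Qed.

Lemma restrict_lsupp_in a b (h : ord_le lt b a) x : In x (lsupp a) -> In (r a b h x) (lsupp b).
Proof.
  apply (least_support_incl F HP (z a) _ (fun x => In (r a b h x) (lsupp b)) (Hlsupp a)).
  apply (supports_preimage F HP (r a b h) (fun y => In y (lsupp b))).
  rewrite Hz. apply (proj1 (Hlsupp b)).
Qed.

Section Stable.

Context (a0 : T) (Ha0 : forall a, length (lsupp a) <= length (lsupp a0)).

Lemma restrict_lsupp_least a (h : ord_le lt a0 a) :
  least_support F (z a0) (map (r a a0 h) (lsupp a)).
Proof.
  split; [apply supports_restrict_lsupp|].
  intros l' Hl'. rewrite length_map.
  pose proof (length_lsupp_monotone _ _ h). pose proof (Ha0 a).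
  pose proof (proj2 (Hlsupp a0) l' Hl'). lia.
Qed.

Lemma restrict_lsupp_injective a (h : ord_le lt a0 a) x y :
  In x (lsupp a) -> In y (lsupp a) -> r a a0 h x = r a a0 h y -> x = y.
Proof.
  apply NoDup_map_injective_in, (least_support_NoDup F (z a0)), restrict_lsupp_least.
Qed.

Lemma restrict_lsupp_surjective a (h : ord_le lt a0 a) s :
  In s (lsupp a0) -> exists x, In x (lsupp a) /\ r a a0 h x = s.
Proof.
  intros Hs.
  pose proof (least_support_incl F HP _ _ _ (Hlsupp a0) (proj1 (restrict_lsupp_least a h)) s Hs)
    as H.
  apply in_map_iff in H. firstorder.
Qed.

Definition thread_at (s : X a0) (b : T) (x : X b) : Prop :=
  exists a (h0 : ord_le lt a0 a) (hb : ord_le lt b a) y,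
    In y (lsupp a) /\ r a a0 h0 y = s /\ r a b hb y = x.

Lemma thread_at_exists s : In s (lsupp a0) -> forall b, exists x, thread_at s b x.
Proof.
  intros Hs b. destruct (ord_le_upper_bound lt Hwo a0 b) as [a [h0 hb]].
  destruct (restrict_lsupp_surjective a h0 s Hs) as [y [Hy Ey]].
  exists (r a b hb y), a, h0, hb, y. auto.
Qed.

Lemma thread_at_unique s b x1 x2 : thread_at s b x1 -> thread_at s b x2 -> x1 = x2.
Proof.
  intros [a1 [h1 [k1 [y1 [Hy1 [E1 <-]]]]]] [a2 [h2 [k2 [y2 [Hy2 [E2 <-]]]]]].
  destruct (ord_le_upper_bound lt Hwo a1 a2) as [c [m1 m2]].
  assert (hc : ord_le lt a0 c) by exact (ord_le_trans lt Hwo _ _ _ h1 m1).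
  assert (Hs : In s (lsupp a0)) by (rewrite <- E1; now apply restrict_lsupp_in).
  destruct (restrict_lsupp_surjective c hc s Hs) as [y [Hy Ey]].
  assert (Y1 : r c a1 m1 y = y1).
  { apply (restrict_lsupp_injective a1 h1); auto using restrict_lsupp_in.
    rewrite (proj2 HX c a1 a0 m1 h1 hc). congruence. }
  assert (Y2 : r c a2 m2 y = y2).
  { apply (restrict_lsupp_injective a2 h2); auto using restrict_lsupp_in.
    rewrite (proj2 HX c a2 a0 m2 h2 hc). congruence. }
  assert (hb : ord_le lt b c) by exact (ord_le_trans lt Hwo _ _ _ k1 m1).
  now rewrite <- Y1, <- Y2, !(proj2 HX c _ b _ _ hb).
Qed.

Lemma thread_at_restrict s a b (h : ord_le lt b a) x :
  thread_at s a x -> thread_at s b (r a b h x).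
Proof.
  intros [c [h0 [ha [y [Hy [E1 <-]]]]]].
  exists c, h0, (ord_le_trans lt Hwo _ _ _ h ha), y.
  repeat split; auto. symmetry. apply (proj2 HX).
Qed.

Lemma thread_at_lsupp a (h : ord_le lt a0 a) x : In x (lsupp a) -> thread_at (r a a0 h x) a x.
Proof. intros Hx. exists a, h, (or_intror eq_refl), x. repeat split; auto. apply (proj1 HX). Qed.

Section Threads.

Context (thread : {s | In s (lsupp a0)} -> forall b, X b)
  (Hthread : forall s b, thread_at (proj1_sig s) b (thread s b)).

Lemma thread_compatible s a b (h : ord_le lt b a) : r a b h (thread s a) = thread s b.
Proof. apply (thread_at_unique (proj1_sig s) b); [apply thread_at_restrict|]; apply Hthread. Qed.

Definition thread_limit (s : {s | In s (lsupp a0)}) : op_limit lt X r :=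
  exist _ (thread s) (thread_compatible s).

Lemma comparison_thread_limit_stable u0 a (h : ord_le lt a0 a) :
  fmap F (@proj1_sig _ _) u0 = z a0 -> comparison F lt X r (fmap F thread_limit u0) a = z a.
Proof.
  intros Hu0. destruct (proj1 (Hlsupp a)) as [ua Hua].
  set (rho := fun x : {x | In x (lsupp a)} =>
         exist (fun s => In s (lsupp a0)) (r a a0 h (proj1_sig x))
               (restrict_lsupp_in a a0 h _ (proj2_sig x))).
  assert (Hrho : fmap F rho ua = u0).
  { apply (fmap_mono_injective F HP (@proj1_sig _ (fun s => In s (lsupp a0))));
      [apply is_mono_proj1_sig|].
    rewrite Hu0, <- fmap_comp. simpl.
    rewrite (fmap_comp F _ _ _ (@proj1_sig _ _) (r a a0 h)), Hua. apply Hz. }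
  assert (Hthread_rho : forall x, thread (rho x) a = proj1_sig x).
  { intros x. apply (thread_at_unique (proj1_sig (rho x)) a);
      [apply Hthread|apply thread_at_lsupp, proj2_sig]. }
  unfold comparison. rewrite <- Hrho, <- !fmap_comp, <- Hua. simpl.
  f_equal. extensionality x. apply Hthread_rho.
Qed.

Lemma comparison_thread_limit u0 :
  fmap F (@proj1_sig _ _) u0 = z a0 ->
  forall a, comparison F lt X r (fmap F thread_limit u0) a = z a.
Proof.
  intros Hu0 a. destruct (ord_le_upper_bound lt Hwo a0 a) as [c [h0 ha]].
  rewrite <- (comparison_cone F lt X r _ c a ha), <- (Hz c a ha).
  f_equal. now apply comparison_thread_limit_stable.
Qed.

End Threads.

Lemma compatible_family_lifts_stable : exists y, forall a, comparison F lt X r y a = z a.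
Proof.
  assert (Hth : forall s : {s | In s (lsupp a0)},
             exists th : forall b, X b, forall b, thread_at (proj1_sig s) b (th b)).
  { intros s. apply dependent_choice. apply thread_at_exists, proj2_sig. }
  destruct (choice _ Hth) as [thread Hthread].
  destruct (proj1 (Hlsupp a0)) as [u0 Hu0].
  exists (fmap F (thread_limit thread Hthread) u0). now apply comparison_thread_limit.
Qed.

End Stable.

Lemma compatible_family_lifts (Hreg : is_regular_ordinal lt) (Hunc : is_uncountable T) :
  exists y, forall a, comparison F lt X r y a = z a.
Proof.
  destruct (monotone_nat_attains_max lt Hwo Hreg Hunc (fun a => length (lsupp a))) as [a0 Ha0].
  - intros a b h. now apply length_lsupp_monotone.
  - exact (compatible_family_lifts_stable a0 Ha0).
Qed.

End Surjectivity.

Lemma comparison_surjective (F : SetFunctor) (HF : finitary F) (HP : preserves_mono_pullbacks F)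
  {T : Type} (lt : T -> T -> Prop) (Hwo : is_well_order lt)
  (Hreg : is_regular_ordinal lt) (Hunc : is_uncountable T)
  (X : T -> Type) (r : forall a b, ord_le lt b a -> X a -> X b) (HX : is_op_diagram lt X r)
  (z : forall a, Fob F (X a)) :
  (forall a b (h : ord_le lt b a), fmap F (r a b h) (z a) = z b) ->
  exists y, forall a, comparison F lt X r y a = z a.
Proof.
  intros Hz.
  destruct (dependent_choice _ (fun a => least_support_exists F HF (z a))) as [lsupp Hlsupp].
  exact (compatible_family_lifts F HP lt Hwo X r HX z Hz lsupp Hlsupp Hreg Hunc).
Qed.

Theorem mainTheorem1 (F : SetFunctor)
  (HF : finitary F) (HP : preserves_mono_pullbacks F)
  (T : Type) (lt : T -> T -> Prop)
  (Hwo : is_well_order lt) (Hreg : is_regular_ordinal lt) (Hunc : is_uncountable T)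
  (X : T -> Type) (r : forall a b, ord_le lt b a -> X a -> X b)
  (HX : is_op_diagram lt X r) :
  (forall y1 y2 : Fob F (op_limit lt X r),
      (forall a, comparison F lt X r y1 a = comparison F lt X r y2 a) -> y1 = y2) /\
  (forall z : forall a, Fob F (X a),
      (forall a b (h : ord_le lt b a), fmap F (r a b h) (z a) = z b) ->
      exists y : Fob F (op_limit lt X r), forall a, comparison F lt X r y a = z a).
Proof.
  split.
  - destruct (proj1 (proj1 Hreg)) as [t _].
    exact (comparison_injective F lt Hwo X r HF HP (inhabits t)).
  - exact (comparison_surjective F HF HP lt Hwo Hreg Hunc X r HX).
Qed.
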